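(* Let $r,s\in(0,1)$ satisfy \[s = 2r(1-r)\qquad\text{and}\qquad r = 3s(1-s)^2 + 3s^2(1-s).\] Then the product measures $\mu_r$ and $\mu_s$ on $\Omega=\{0,1\}^{\mathbb{N}}$ are not homeomorphic; that is, there is no homeomorphism $h:\Omega\to\Omega$ with $\mu_s = \mu_r\circ h^{-1}$ (i.e. $\mu_s(A)=\mu_r(h^{-1}(A))$ for all Borel $A\subseteq\Omega$).
   Context: $\Omega=\{0,1\}^{\mathbb{N}}$ is the Cantor set with the product topology. For $r\in[0,1]$, $\lambda_r$ is the probability measure on $\{0,1\}$ with $\lambda_r\{1\}=r$, $\lambda_r\{0\}=1-r$, and $\mu_r$ is the infinite product measure $\lambda_r^{\mathbb{N}}$ on $\Omega$ (the Bernoulli measure). Two Borel measures $\mu,\nu$ on $\Omega$ are called homeomorphic if there is a homeomorphism $h$ of $\Omega$ onto itself with $\nu=\mu\circ h^{-1}$. *)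

From HB Require Import structures.
From mathcomp Require Import all_boot all_order all_algebra.
From mathcomp Require Import all_classical all_reals all_analysis.
Set Implicit Arguments.
Unset Strict Implicit.
Unset Printing Implicit Defensive.
Import Order.TTheory GRing.Theory Num.Theory.
Local Open Scope classical_set_scope.
Local Open Scope ring_scope.

Definition Omega : topologicalType := cantor_space.

Definition BorelOmega : measurableType (sigma_display (@open Omega)) :=
  g_sigma_algebraType (@open Omega).

(* lambda_r on {0,1}: lambda_r{1} = r, lambda_r{0} = 1 - r (true = 1). *)
Definition lambda {R : realType} (r : R) (b : bool) : R :=
  if b then r else 1 - r.

Definition cylinder (n : nat) (w : nat -> bool) : set BorelOmega :=
  [set x : BorelOmega | forall i, (i < n)%N -> x i = w i].

(* mu is the Bernoulli product measure mu_r = lambda_r^N: it is the (unique,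
   by the pi-lambda theorem, since cylinders form a pi-system generating the
   Borel sets and include Omega) Borel measure on Omega whose value on each
   cylinder is the product of the lambda_r-weights. *)
Definition is_bernoulli {R : realType} (r : R)
    (mu : {measure set BorelOmega -> \bar R}) : Prop :=
  forall (n : nat) (w : nat -> bool),
    mu (cylinder n w) = (\prod_(i < n) lambda r (w i))%:E.

Definition homeomorphism (h : Omega -> Omega) : Prop :=
  exists g : Omega -> Omega,
    [/\ cancel h g, cancel g h, continuous h & continuous g].

From HB Require Import structures.
From mathcomp Require Import all_boot all_order all_algebra.
From mathcomp Require Import all_classical all_reals all_analysis.
From mathcomp Require Import finmap ring.

(* If a clopen set W is a union of cylinders of length n, then mu_t(W) is the
   sum over its words of t^|A| (1-t)^(n-|A|), with |A| the number of ones.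
   If W misses the zero sequence, this is k t modulo t^2 Z[t], where k is the
   number of words with a single one.  Given a homeomorphism h with
   mu_s = mu_r o h^-1, continuity of h^-1 at a unit sequence e_j <> h 0 yields
   a cylinder around e_j, of s-measure s (1-s)^(M-1) = 2r modulo r^2 Z[r],
   whose preimage V lies in some {x | x_p = 1}; hence mu_r(V) = k r modulo
   r^2 Z[r] with k <= 1.  Dividing by r, r is a root of an integer polynomial
   with constant term 2 - k, i.e. 1 or 2.  But the relations between r and s
   make r a root of 12X^3 - 24X^2 + 18X - 5, which is irreducible over Q and
   primitive, so every integer polynomial vanishing at r has constant term
   divisible by 5. *)

Set Implicit Arguments.
Unset Strict Implicit.
Unset Printing Implicit Defensive.
Import Order.TTheory GRing.Theory Num.Theory.
Local Open Scope classical_set_scope.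
Local Open Scope ring_scope.

Lemma cylinder0 (w : nat -> bool) : cylinder 0 w = setT.
Proof. by apply/seteqP; split => // x _ i; rewrite ltn0. Qed.

Lemma cylinderS n (w : nat -> bool) :
  cylinder n.+1 w = cylinder n w `&` [set x | x n = w n].
Proof.
apply/seteqP; split => x /=.
  by move=> xw; split => [i lti|]; apply: xw => //; exact: ltnW.
by move=> [xw xwn] i; rewrite ltnS leq_eqVlt => /predU1P [->|/xw].
Qed.

Lemma subset_cylinder m n (w : nat -> bool) :
  (m <= n)%N -> cylinder n w `<=` cylinder m w.
Proof. by move=> mn x xw i lti; apply: xw; exact: leq_trans lti mn. Qed.

Lemma cylinder_clopen n (w : nat -> bool) : clopen (cylinder n w : set Omega).
Proof.
elim: n => [|n IH]; first by rewrite cylinder0; exact: clopenT.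
rewrite cylinderS; apply: clopenI => //.
rewrite (_ : [set x | x n = w n] = proj n @^-1` [set w n]) //.
apply: preimage_clopen; last exact: proj_continuous.
by split; [exact: discrete_open|exact: discrete_closed].
Qed.

Lemma measurable_cylinder n (w : nat -> bool) : measurable (cylinder n w).
Proof. by apply: sub_sigma_algebra; case: (cylinder_clopen n w). Qed.

(* The cylinders around x shrink to {x}, so by compactness the open sets
   ~` cylinder n x `|` U have a finite subcover. *)
Lemma open_cylinder (U : set Omega) (x : Omega) : open U -> U x ->
  exists n, cylinder n x `<=` U.
Proof.
move=> oU Ux; have := cantor_space_compact; rewrite compact_cover.
case/(_ nat setT (fun n => ~` cylinder n x `|` U)) => [n _|z _|D _ cover].
- by apply: openU => //; apply: closed_openC; case: (cylinder_clopen n x).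
- have [->|zx] := pselect (z = x); first by exists 0%N => //; right.
  have [i zix] : exists i, z i <> x i.
    by apply/existsNP => zx'; apply: zx; exact: funext.
  by exists i.+1 => //; left => zx'; apply: zix; exact: zx' i (ltnSn i).
exists (\max_(i <- (D : seq nat)) i) => z xz; have [i iD [|//]] := cover z I.
by case; apply: subset_cylinder xz; exact: (@leq_bigmax_seq _ _ _ id).
Qed.

Lemma clopen_cylinder_cover (V : set Omega) : clopen V ->
  exists n, forall x, V x -> cylinder n x `<=` V.
Proof.
case=> oV cV.
have /choice [nx cyl_nx] : forall x, exists n,
    cylinder n x `<=` V \/ cylinder n x `<=` ~` V.
  move=> x; have [Vx|nVx] := pselect (V x).
    by have [n] := open_cylinder oV Vx; exists n; left.
  by have [n] := open_cylinder (closed_openC cV) nVx; exists n; right.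
have := cantor_space_compact; rewrite compact_cover.
case/(_ Omega setT (fun x => cylinder (nx x) x)) => [x _|z _|D _ cover].
- by case: (cylinder_clopen (nx x) x).
- by exists z.
pose N := \max_(x <- (D : seq Omega)) nx x.
exists N => a Va b ab; have [x xD ax] := cover a I.
have le_nx : (nx x <= N)%N by exact: leq_bigmax_seq.
have bx : cylinder (nx x) x b.
  by move=> i lti; rewrite ab ?ax //; exact: leq_trans lti le_nx.
by case: (cyl_nx x) => [/(_ _ bx)|/(_ _ ax)].
Qed.

Definition unit_seq (j : nat) : nat -> bool := fun i => i == j.

Lemma homeomorphism_unit_cylinder (h g : Omega -> Omega) :
    cancel h g -> cancel g h -> continuous g ->
  exists j M p,
    (j < M)%N /\ h @^-1` cylinder M (unit_seq j) `<=` [set x | x p].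
Proof.
move=> hK gK g_cont.
have [j ej_h0] : exists j, unit_seq j <> h (fun=> false).
  have [e0|] := pselect (unit_seq 0 = h (fun=> false)); last by exists 0%N.
  by exists 1%N => e1; have := congr1 (fun x => x 0%N) (etrans e1 (esym e0)).
have [p gej_p] : exists p, g (unit_seq j) p.
  apply: contra_notP ej_h0 => /forallNP gej0; rewrite -[unit_seq j]gK.
  by congr h; apply: funext => i; apply/negbTE/negP/gej0.
have [M0 M0_sub] : exists M0,
    cylinder M0 (unit_seq j) `<=` g @^-1` cylinder p.+1 (g (unit_seq j)).
  apply: open_cylinder => //.
  exact: (preimage_clopen (cylinder_clopen _ _) g_cont).1.
exists j, (maxn M0 j.+1), p; split; first by rewrite leq_max ltnSn orbT.
move=> x /(subset_cylinder (leq_maxl M0 j.+1)) /M0_sub; rewrite /= hK => xp.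
by rewrite xp.
Qed.

Definition ones n (x : nat -> bool) : {set 'I_n} := [set i : 'I_n | x i].

Lemma cylinder_ones n (x : nat -> bool) :
  cylinder n x = ones n @^-1` [set ones n x].
Proof.
apply/seteqP; split => y /=.
  by move=> yx; apply/setP => i; rewrite !inE yx.
by move=> /setP yx i ltin; have := yx (Ordinal ltin); rewrite !inE.
Qed.

Lemma finite_ones_image n (W : set Omega) : finite_set (ones n @` W).
Proof. exact: finite_finset. Qed.

Lemma prod_lambda (R : realType) (t : R) n (x : nat -> bool) :
  \prod_(i < n) lambda t (x i) =
  t ^+ #|ones n x| * (1 - t) ^+ (n - #|ones n x|).
Proof.
rewrite (bigID (fun i : 'I_n => x i)) /=.
rewrite (eq_bigr (fun=> t)); last by move=> i ->.
rewrite [X in _ * X](eq_bigr (fun=> 1 - t)); last by move=> i /negbTE ->.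
rewrite !prodr_const; congr (_ ^+ _ * _ ^+ _).
  by apply: eq_card => i; rewrite inE.
rewrite -[X in (X - _)%N](card_ord n) -(cardC (ones n x)) addKn.
by apply: eq_card => i; rewrite !inE.
Qed.

Lemma bernoulli_measure_of_cylinders (R : realType) (t : R)
    (mu : {measure set BorelOmega -> \bar R}) n (W : set BorelOmega) :
    is_bernoulli t mu -> (forall x, W x -> cylinder n x `<=` W) ->
  mu W = (\sum_(A <- fset_set (ones n @` W))
            t ^+ #|A| * (1 - t) ^+ (n - #|A|))%:E.
Proof.
move=> mu_t W_cyl.
have W_union : W = \bigcup_(A in ones n @` W) ones n @^-1` [set A].
  apply/seteqP; split => [x Wx|y [_ [x Wx <-]]]; first by exists (ones n x).
  by rewrite -cylinder_ones; exact: W_cyl.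
rewrite [in LHS]W_union measure_fin_bigcup; last 3 first.
- exact: finite_ones_image.
- exact: trivIset_preimage1.
- by move=> _ [x _ <-]; rewrite -cylinder_ones; exact: measurable_cylinder.
rewrite fsbig_finite //= -sumEFin big_seq [RHS]big_seq; apply: eq_bigr => A.
rewrite (in_fset_set (finite_ones_image _ _)) => /set_mem [x _ <-].
by rewrite -cylinder_ones mu_t prod_lambda.
Qed.

Lemma bernoulli_measure_unit_cylinder (R : realType) (t : R)
    (mu : {measure set BorelOmega -> \bar R}) j M :
    is_bernoulli t mu -> (j < M)%N ->
  mu (cylinder M (unit_seq j)) = (t * (1 - t) ^+ M.-1)%:E.
Proof.
move=> mu_t jM; rewrite mu_t prod_lambda.
have -> : ones M (unit_seq j) = [set Ordinal jM]%SET.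
  by apply/setP => i; rewrite !inE.
by rewrite cards1 expr1 subn1.
Qed.

Lemma count_card1_le1 n (As : seq {set 'I_n}) (i : 'I_n) :
    uniq As -> {in As, forall A : {set 'I_n}, i \in A} ->
  (count (fun A : {set 'I_n} => #|A| == 1%N) As <= 1)%N.
Proof.
move=> As_uniq As_i; rewrite -size_filter.
have As1 : {subset [seq A : {set 'I_n} <- As | #|A| == 1%N]
              <= [:: [set i]%SET]}.
  move=> A; rewrite mem_filter => /andP [/cards1P [a A_a] /As_i].
  by rewrite A_a inE => /eqP <-; rewrite mem_seq1.
exact: uniq_leq_size (filter_uniq _ As_uniq) As1.
Qed.

Lemma bernoulli_measure_clopen_ones (R : realType) (t : R)
    (mu : {measure set BorelOmega -> \bar R}) (V : set Omega) p :
    is_bernoulli t mu -> clopen V -> V `<=` [set x | x p] ->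
  exists m ks, [/\ all (leq 1) ks, (count (pred1 1%N) ks <= 1)%N &
    mu V = (\sum_(k <- ks) t ^+ k * (1 - t) ^+ (m - k))%:E].
Proof.
move=> mu_t V_clopen V_p; have [m0 V_cyl] := clopen_cylinder_cover V_clopen.
pose m := maxn m0 p.+1; pose As := fset_set (ones m @` V).
have Vm x : V x -> cylinder m x `<=` V.
  move=> Vx; apply: subset_trans (V_cyl x Vx).
  exact/subset_cylinder/leq_maxl.
have p_m : (p < m)%N by rewrite leq_max ltnSn orbT.
have As_p : {in As, forall A : {set 'I_m}, Ordinal p_m \in A}.
  move=> A; rewrite (in_fset_set (finite_ones_image _ _)) => /set_mem [x Vx <-].
  by rewrite inE; exact: V_p.
exists m, [seq #|A| | A : {set 'I_m} <- As]; split.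
- rewrite all_map; apply/allP => A /As_p pA.
  by apply/card_gt0P; exists (Ordinal p_m).
- by rewrite count_map; apply: count_card1_le1 As_p; exact: fset_uniq.
- by rewrite (bernoulli_measure_of_cylinders mu_t Vm) big_map.
Qed.

Definition cubic : {poly int} := Poly [:: -5; 18; -24; 12].

Lemma size_cubic : size cubic = 4%N.
Proof. by rewrite /cubic (@PolyK _ 0). Qed.

Lemma horner_cubic (S : comNzRingType) (x : S) :
  (map_poly intr cubic).[x] = 12 * x ^+ 3 - 24 * x ^+ 2 + 18 * x - 5.
Proof. by rewrite /cubic map_Poly horner_Poly /= mul0r add0r; ring. Qed.

Lemma zprimitive_cubic : zprimitive cubic = cubic.
Proof.
rewrite /zprimitive; have -> : zcontents cubic = 1.
  rewrite /zcontents lead_coefE size_cubic !big_ord_recl big_ord0.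
  by rewrite /cubic !coef_Poly.
by apply/polyP => i; rewrite coef_map_id0 ?div0z // divz1.
Qed.

(* Writing x = n / d in lowest terms, d must be even, and then so must n. *)
Lemma cubic_rat_no_root (x : rat) : ~~ root (map_poly intr cubic) x.
Proof.
rewrite /root horner_cubic; apply/eqP => x_root.
set n := numq x; set d := denq x.
have E : 12 * n ^+ 3 - 24 * n ^+ 2 * d + 18 * n * d ^+ 2 - 5 * d ^+ 3 = 0.
  apply/eqP; rewrite -(intr_eq0 rat) -(mulr0 (d%:~R ^+ 3)) -x_root; apply/eqP.
  by rewrite !(rmorphB, rmorphD, rmorphM, rmorphXn) /= numqE; ring.
have even_of_cube a : (2 %| a ^+ 3)%Z -> (2 %| a)%Z.
  by rewrite dvdzE abszX Euclid_dvdX // => /andP[].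
have d_even : (2 %| d)%Z.
  apply: even_of_cube; rewrite -(@Gauss_dvdzr 2 5) //; apply/dvdzP.
  exists (6 * n ^+ 3 - 12 * n ^+ 2 * d + 9 * n * d ^+ 2).
  by rewrite -[LHS]addr0 -E; ring.
have [e de] := dvdzP d_even.
have n_even : (2 %| n)%Z.
  apply: even_of_cube; rewrite -(@Gauss_dvdzr 2 3) //; apply/dvdzP.
  exists (6 * n ^+ 2 * e - 9 * n * e ^+ 2 + 5 * e ^+ 3).
  apply/eqP; rewrite -subr_eq0; apply/eqP/(@mulfI _ 4) => //.
  by rewrite mulr0 -E de; ring.
have /eqP gcd1 := coprime_num_den x.
move: n_even d_even; rewrite !dvdzE /= => n_even d_even.
by have := dvdn_gcd 2 `|n| `|d|; rewrite gcd1 n_even d_even.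
Qed.

Lemma cubic_rat_irreducible :
  irreducible_poly (map_poly intr cubic : {poly rat}).
Proof.
apply: cubic_irreducible; last exact: cubic_rat_no_root.
by rewrite size_map_inj_poly ?size_cubic //; exact: intr_inj.
Qed.

Lemma cubic_root_dvd_coef0 (S : numFieldType) (x : S) (A : {poly int}) :
    12 * x ^+ 3 - 24 * x ^+ 2 + 18 * x - 5 = 0 ->
  (map_poly intr A).[x] = 0 -> (5 %| A`_0)%Z.
Proof.
move=> x_root Ax.
have ratr_intr (B : {poly int}) :
    map_poly ratr (map_poly intr B : {poly rat}) = map_poly intr B :> {poly S}.
  by rewrite -map_poly_comp; apply: eq_map_poly => z /=; exact: ratr_int.
have : ~~ coprimep (map_poly intr cubic) (map_poly intr A : {poly rat}).
  rewrite -(coprimep_map (@ratr S)) !ratr_intr; apply/negP => /coprimep_root.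
  by move=> /(_ x); rewrite /root horner_cubic x_root Ax eqxx => /(_ isT).
rewrite (irreducible_poly_coprime _ cubic_rat_irreducible) negbK dvdp_rat_int.
case/dvdpP_int => G ->; rewrite zprimitive_cubic coef0M /cubic coef_Poly /=.
by rewrite mulNr rpredN dvdz_mulr.
Qed.

Lemma cubic_root_of_parameters (R : idomainType) (r s : R) : r != 0 ->
    s = 2 * r * (1 - r) -> r = 3 * s * (1 - s) ^+ 2 + 3 * s ^+ 2 * (1 - s) ->
  12 * r ^+ 3 - 24 * r ^+ 2 + 18 * r - 5 = 0.
Proof.
move=> r0 s_r r_s; apply: (mulfI r0).
by rewrite mulr0 -[X in _ = X](subrr r) [X in _ = _ - X]r_s s_r; ring.
Qed.

(* Dividing the difference of the two sides by r leaves an integer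
   polynomial B with B(r) = 0 and B(0) = 2 - #{k in ks | k = 1}. *)
Lemma bernoulli_sums_neq (R : numFieldType) (r s : R) n m (ks : seq nat) :
    r != 0 -> 12 * r ^+ 3 - 24 * r ^+ 2 + 18 * r - 5 = 0 ->
    s = 2 * r * (1 - r) -> all (leq 1) ks -> (count (pred1 1%N) ks <= 1)%N ->
  s * (1 - s) ^+ n != \sum_(k <- ks) r ^+ k * (1 - r) ^+ (m - k).
Proof.
move=> r0 r_root s_r ks_gt0 ks1; apply/eqP => E.
pose B : {poly int} := 2 * (1 - 'X) * (1 - 2 * 'X * (1 - 'X)) ^+ n -
  \sum_(k <- ks) 'X ^+ k.-1 * (1 - 'X) ^+ (m - k).
have B_r : r * (map_poly intr B).[r] = 0.
  rewrite -(subrr (s * (1 - s) ^+ n)) {2}E.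
  rewrite !(rmorphB, rmorphM, rmorphXn, rmorph1, rmorph_nat) rmorph_sum /=.
  rewrite map_polyX !hornerE horner_sum mulrBr mulr_sumr; congr (_ - _).
    by rewrite s_r; ring.
  rewrite !big_seq; apply: eq_bigr => k /(allP ks_gt0) k_gt0.
  rewrite !(rmorphM, rmorphXn, rmorphB, rmorph1) /= map_polyX !hornerE.
  by rewrite -[in r ^+ k](prednK k_gt0) exprS.
have B0 : B`_0 = 2 - (count (pred1 1%N) ks)%:R.
  rewrite -horner_coef0 !hornerE horner_sum expr1n mulr1; congr (_ - _).
  rewrite -sum1_count natr_sum [RHS]big_mkcond !big_seq; apply: eq_bigr => k.
  move=> /(allP ks_gt0); case: k => [|[|k]] //= _.
    by rewrite !hornerE expr1n.
  by rewrite !hornerE exprS !mul0r.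
have B_root : (map_poly intr B).[r] = 0 by apply: (mulfI r0); rewrite mulr0.
have /eqP := cubic_root_dvd_coef0 r_root B_root.
by rewrite B0; case: (count _ ks) ks1 => [|[]].
Qed.

Theorem mainTheorem1 (R : realType) (r s : R)
    (hr : 0 < r < 1) (hs : 0 < s < 1)
    (hsr : s = 2 * r * (1 - r))
    (hrs : r = 3 * s * (1 - s) ^+ 2 + 3 * s ^+ 2 * (1 - s))
    (mu_r mu_s : {measure set BorelOmega -> \bar R})
    (Hr : is_bernoulli r mu_r) (Hs : is_bernoulli s mu_s) :
  ~ exists h : Omega -> Omega,
      homeomorphism h /\
      (forall A : set BorelOmega, measurable A -> mu_s A = mu_r (h @^-1` A)).
Proof.
move=> [h [[g [hK gK h_cont g_cont]] h_mu]].
have r0 : r != 0 by case/andP: hr => /lt0r_neq0.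
have [j [M [p [jM V_p]]]] := homeomorphism_unit_cylinder hK gK g_cont.
have V_clopen := preimage_clopen (cylinder_clopen M (unit_seq j)) h_cont.
have [m [ks [ks_gt0 ks1 mu_V]]] :=
  bernoulli_measure_clopen_ones Hr V_clopen V_p.
have := h_mu _ (measurable_cylinder M (unit_seq j)).
rewrite (bernoulli_measure_unit_cylinder Hs jM) mu_V => -[]; apply/eqP.
have r_root := cubic_root_of_parameters r0 hsr hrs.
exact: bernoulli_sums_neq r0 r_root hsr ks_gt0 ks1.
Qed.
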